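(* Let $(g,f)$ be a strong sample mechanism on $\mathcal{G}^1_n$ and let $S\subseteq N$. For any nomination profiles $\mathbf{x},\mathbf{x}'\in\mathcal{G}^1_n$ with $\mathbf{x}_{-S}=\mathbf{x}'_{-S}$ (i.e., every vertex outside $S$ casts the same vote in $\mathbf{x}$ and $\mathbf{x}'$), if $S\setminus g(\mathbf{x})\neq\emptyset$ then $S\setminus g(\mathbf{x}')\neq\emptyset$.
   Context: $N=\{1,\dots,n\}$. $\mathcal{G}^1_n$ is the set of directed graphs on $N$ without self-loops in which every vertex has out-degree exactly $1$; a profile $\mathbf{x}$ is written as a tuple with $x_u\in N\setminus\{u\}$ the vertex nominated by $u$, and $(x'_u,\mathbf{x}_{-u})$ denotes the profile where $u$'s vote is changed to $x'_u$. $\mathbf{x}_{-S}$ denotes the graph obtained by deleting all outgoing edges of vertices in $S$. For a profile $\mathbf{x}$ and $S\subseteq N$, $W_S(\mathbf{x})=\{w\in N\setminus S:\ (v,w)\text{ is an edge for some } v\in S\}$. A sample mechanism $(g,f)$ first selects a sample set $g(\mathbf{x})$ using a function $g:\mathcal{G}^1_n\to 2^N\setminus\{\emptyset\}$ and then applies a (possibly randomized) selection rule $f$ whose range is restricted to $W_{g(\mathbf{x})}(\mathbf{x})$ (no winner if this set is empty). It is a strong sample mechanism if $g(x'_u,\mathbf{x}_{-u})=g(\mathbf{x})$ for all $\mathbf{x}\in\mathcal{G}^1_n$, all $u\in g(\mathbf{x})$ and all $x'_u\in N\setminus\{u\}$. *)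

(* Vertices N = {1..n} are modelled by 'I_n. *)
From mathcomp Require Import all_boot.
Set Implicit Arguments. Unset Strict Implicit. Unset Printing Implicit Defensive.

(* A (candidate) nomination profile: x u is the vertex nominated by u. *)
Definition vote n := {ffun 'I_n -> 'I_n}.

(* x is in G^1_n: no self-loops (out-degree exactly 1 is built into the function). *)
Definition is_profile n (x : vote n) : bool := [forall u, x u != u].

Definition upd n (x : vote n) (u y : 'I_n) : vote n :=
  [ffun v => if v == u then y else x v].

(* g : G^1_n -> 2^N \ {emptyset}; only its values on genuine profiles matter. *)
Definition sample_fun n (g : vote n -> {set 'I_n}) : Prop :=
  forall x, is_profile x -> g x != set0.

Definition strong_sample n (g : vote n -> {set 'I_n}) : Prop :=
  forall x, is_profile x -> forall u, u \in g x ->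
  forall y, y != u -> g (upd x u y) = g x.

From mathcomp Require Import all_boot.

Set Implicit Arguments.
Unset Strict Implicit.
Unset Printing Implicit Defensive.

(* If every vertex of S already lies in g x', let the vertices of S switch one
   at a time from their votes in x' to their votes in x.  Each voter that moves
   is in the current sample set, so by the strong sample property the sample
   set never changes; at the end the profile is x, hence g x = g x'.  Thus
   S \subset g x' forces S \subset g x, which is the contrapositive. *)

Section Hybrid.

Variable n : nat.
Implicit Types (x y : vote n) (T : {set 'I_n}).

Definition hybrid T x y : vote n := [ffun v => if v \in T then x v else y v].

Lemma hybrid_set0 x y : hybrid set0 x y = y.
Proof. by apply/ffunP=> v; rewrite ffunE inE. Qed.

Lemma hybrid_agree T x y :
  (forall v, v \notin T -> x v = y v) -> hybrid T x y = x.
Proof.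
move=> agree; apply/ffunP=> v; rewrite ffunE.
by case: (boolP (v \in T)) => // /agree ->.
Qed.

Lemma hybrid_setD1 T x y u :
  u \in T -> hybrid T x y = upd (hybrid (T :\ u) x y) u (x u).
Proof.
move=> uT; apply/ffunP=> v; rewrite /upd /hybrid !ffunE in_setD1.
by case: eqP => [->|_]; rewrite ?uT.
Qed.

Lemma hybrid_profile T x y :
  is_profile x -> is_profile y -> is_profile (hybrid T x y).
Proof.
move=> /forallP px /forallP py; apply/forallP=> v; rewrite ffunE.
by case: (v \in T).
Qed.

Lemma strong_sample_hybrid (g : vote n -> {set 'I_n}) T x y :
  strong_sample g -> is_profile x -> is_profile y ->
  T \subset g y -> g (hybrid T x y) = g y.
Proof.
move=> sg px py.
have [k] := ubnP #|T|; elim: k T => // k IH T ltTk sTg.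
have [T0 | [u uT]] := set_0Vmem T; first by rewrite T0 hybrid_set0.
have ltT'k : #|T :\ u| < k by rewrite -ltnS (cardsD1 u T) uT in ltTk.
have IHu := IH _ ltT'k (subset_trans (subD1set T u) sTg).
have ug : u \in g (hybrid (T :\ u) x y) by rewrite IHu (subsetP sTg).
have xu : x u != u by move/forallP: px.
by rewrite (hybrid_setD1 x y uT) (sg _ (hybrid_profile _ px py) u ug _ xu).
Qed.

End Hybrid.

Theorem mainTheorem2 (n : nat) (g : vote n -> {set 'I_n}) (S : {set 'I_n}) :
  sample_fun g -> strong_sample g ->
  forall x x' : vote n, is_profile x -> is_profile x' ->
  (forall v, v \notin S -> x v = x' v) ->
  S :\: g x != set0 -> S :\: g x' != set0.
Proof.
move=> _ sg x x' px px' agree; apply: contra; rewrite !setD_eq0 => sSg.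
by rewrite -(hybrid_agree agree) (strong_sample_hybrid sg px px' sSg).
Qed.
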